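(* An $\widehat{\mathrm{FI}}$-module $M$ is an $\mathrm{FI}$-module (i.e. $M$ factors through the functor $\widehat{\mathrm{FI}}\to\mathrm{FI}$) if and only if, for all $n$, the element $(e,2)_n\in\widehat{\mathrm S}_n=\widehat{\mathrm{FI}}(n,n)$ acts trivially on $M_n$.
   Context: $\widehat{\mathrm S}_n=\{(\sigma,d)\in\mathrm S_n\times\mathbb Z: d\text{ odd}\iff\operatorname{sgn}\sigma=-1\}$ for $n\ge2$, trivial for $n=0,1$ (for $n\le1$ the element $(e,2)_n$ is the identity); $(e,2)_n$ is the element $(\mathrm{id},2)$. $\widehat{\mathrm{FI}}$: objects $n\in\mathbb N$, $\widehat{\mathrm{FI}}(n,m)=\widehat{\mathrm S}_m/i_2(\widehat{\mathrm S}_{m-n})$ ($i_1,i_2$ inclusions on first/last letters), composition $([s],[t])\mapsto[t\,i_1(s)]$. $\mathrm{FI}$ is the category of sets $[n]$ and injections, $\mathrm{FI}(n,m)=\mathrm S_m/\mathrm S_{m-n}$, and projection $\widehat{\mathrm S}_m\to\mathrm S_m$ induces a functor $\widehat{\mathrm{FI}}\to\mathrm{FI}$. Modules are functors to abelian groups. *)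

From mathcomp Require Import all_boot all_order all_algebra all_fingroup.
Unset Printing Implicit Defensive.
Import GRing.Theory.
Local Open Scope ring_scope.

(* The groups  Ŝ_m.  Elements are represented by raw pairs            *)
(* (sigma, d) : 'S_m * int, and validity is the predicate hatS_pred.  *)
Definition hatS_pred (m : nat) (p : 'S_m * int) : bool :=
  if (m <= 1)%N then (p.1 == 1%g) && (p.2 == 0)
  else odd `|p.2|%N == odd_perm p.1.

(* Group law.  [hmul t s] is the product "t s", i.e. the permutation    *)
(* part acts as x |-> t (s x).  (MathComp's perm product (s * t) is      *)
(* "first s then t".)                                                  *)
Definition hmul (m : nat) (t s : 'S_m * int) : 'S_m * int :=
  ((s.1 * t.1)%g, t.2 + s.2).

Definition hunit (m : nat) : 'S_m * int := (1%g, 0).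

Definition e2 (n : nat) : 'S_n * int :=
  if (n <= 1)%N then hunit n else (1%g, 2%:Z).

(* Extension of a permutation of [k] to [m] (k <= m), acting on the    *)
(* first k letters, resp. on the last k letters.                        *)
Definition ext1_fun (k m : nat) (s : 'S_k) (i : 'I_m) : 'I_m :=
  match @insub nat (fun j => (j < k)%N) 'I_k (val i) with
  | Some j => insubd i (val (s j))
  | None => i
  end.

Definition ext2_fun (k m : nat) (s : 'S_k) (i : 'I_m) : 'I_m :=
  match @insub nat (fun j => (j < k)%N) 'I_k (val i - (m - k))%N with
  | Some j => if (m - k <= val i)%N then insubd i ((m - k) + val (s j))%N else i
  | None => i
  end.

Definition ext1 (k m : nat) (s : 'S_k) : 'S_m :=
  insubd (1%g : 'S_m) [ffun i => ext1_fun k m s i].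
Definition ext2 (k m : nat) (s : 'S_k) : 'S_m :=
  insubd (1%g : 'S_m) [ffun i => ext2_fun k m s i].

Definition i1 (k m : nat) (s : 'S_k * int) : 'S_m * int :=
  if (k <= 1)%N then hunit m else (ext1 k m s.1, s.2).
Definition i2 (k m : nat) (s : 'S_k * int) : 'S_m * int :=
  if (k <= 1)%N then hunit m else (ext2 k m s.1, s.2).

(* FÎ-modules.  A morphism n -> m (n <= m) of FÎ is a left coset       *)
(* s i_2(Ŝ_{m-n}) with s in Ŝ_m; composition ([s],[t]) |-> [t i_1(s)].  *)
(* A functor FÎ -> Ab is given by abelian groups M n and, for every     *)
(* representative s in Ŝ_m, an additive map act n m s : M n -> M m,     *)
(* depending only on the coset of s, and satisfying the functor laws.   *)
Definition is_FIhat_module (M : nat -> zmodType)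
    (act : forall n m : nat, 'S_m * int -> M n -> M m) : Prop :=
  [/\
      (forall n m s, (n <= m)%N -> hatS_pred m s ->
         forall x y, act n m s (x + y) = act n m s x + act n m s y),
      (forall n m s h, (n <= m)%N -> hatS_pred m s -> hatS_pred (m - n) h ->
         act n m (hmul m s (i2 (m - n) m h)) =1 act n m s),
      (forall n, act n n (hunit n) =1 id) &
      (forall n m l s t, (n <= m)%N -> (m <= l)%N ->
         hatS_pred m s -> hatS_pred l t ->
         forall x, act m l t (act n m s x) = act n l (hmul l t (i1 m l s)) x)].

(* FI: morphisms n -> m are injections 'I_n -> 'I_m.                    *)
Definition ffun_id (n : nat) : {ffun 'I_n -> 'I_n} := [ffun i => i].
Definition ffun_comp (n m l : nat) (g : {ffun 'I_m -> 'I_l})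
  (f : {ffun 'I_n -> 'I_m}) : {ffun 'I_n -> 'I_l} := [ffun i => g (f i)].

Definition is_FI_module (N : nat -> zmodType)
    (nact : forall n m : nat, {ffun 'I_n -> 'I_m} -> N n -> N m) : Prop :=
  [/\ (forall n m (f : {ffun 'I_n -> 'I_m}), injective f ->
         forall x y, nact n m f (x + y) = nact n m f x + nact n m f y),
      (forall n, nact n n (ffun_id n) =1 id) &
      (forall n m l (f : {ffun 'I_n -> 'I_m}) (g : {ffun 'I_m -> 'I_l}),
         injective f -> injective g ->
         forall x, nact m l g (nact n m f x) = nact n l (ffun_comp n m l g f) x)].

(* The functor FÎ -> FI on morphisms: [(sigma, d)] |-> sigma restricted *)
(* to the first n letters.                                              *)
Definition proj (n m : nat) (le : (n <= m)%N) (s : 'S_m * int)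
  : {ffun 'I_n -> 'I_m} := [ffun i => s.1 (widen_ord le i)].

Definition factors_through_FI (M : nat -> zmodType)
    (act : forall n m : nat, 'S_m * int -> M n -> M m) : Prop :=
  exists nact : forall n m : nat, {ffun 'I_n -> 'I_m} -> M n -> M m,
    is_FI_module M nact /\
    (forall n m (le : (n <= m)%N) s, hatS_pred m s ->
       act n m s =1 nact n m (proj n m le s)).

From mathcomp Require Import all_boot all_order all_algebra all_fingroup zify.
Import Order.TTheory GRing.Theory Num.Theory.
Set Implicit Arguments. Unset Strict Implicit.

(* Composing with (e,2)_m only adds 2 to the integer component, so when (e,2) acts
   trivially the action of (sigma, d) depends on sigma alone (for m >= 2 the parity of
   d is determined by sigma).  Two permutations with the same restriction to the first
   n letters differ by a permutation of the last m - n letters, i.e. by an element of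
   i_2(S^_(m-n)) when m - n >= 2 and by the identity otherwise; hence the action only
   depends on that restriction, i.e. on the image of the morphism in FI. *)

Lemma odd_abszD (a b : int) : odd `|(a + b)%R| = odd `|a| (+) odd `|b|.
Proof.
have odd_mod2 (n : nat) : odd n = (n %% 2 == 1) by rewrite modn2; case: (odd n).
rewrite !odd_mod2.
by case: (`|a| %% 2 == 1) / eqP => ?; case: (`|b| %% 2 == 1) / eqP => ? /=;
  apply/eqP; lia.
Qed.

Definition perm_shift (o k m : nat) (s : 'S_k) (E : 'S_m) : Prop :=
  (forall (i : 'I_m) (j : 'I_k), i = o + j :> nat -> E i = o + s j :> nat) /\
  (forall i : 'I_m, ~~ (o <= i < o + k) -> E i = i).

Section PermShift.
Variables o k m : nat.
Implicit Types (s : 'S_k) (E : 'S_m).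

Lemma perm_shift_uniq s E E' : perm_shift o s E -> perm_shift o s E' -> E = E'.
Proof.
move=> [E_in E_out] [E'_in E'_out]; apply/permP => i.
have [/andP [le_oi lt_io] | out] := boolP (o <= i < o + k); last by rewrite E_out ?E'_out.
have lt_ik : i - o < k by lia.
have def_i : i = o + Ordinal lt_ik :> nat by rewrite /= subnKC.
by apply: ord_inj; rewrite (E_in _ _ def_i) (E'_in _ _ def_i).
Qed.

Lemma perm_shiftM s t E F :
  perm_shift o s E -> perm_shift o t F -> perm_shift o (s * t)%g (E * F)%g.
Proof.
move=> [E_in E_out] [F_in F_out]; split=> [i j def_i | i out].
  by rewrite !permM; apply/F_in/E_in.
by rewrite permM E_out ?F_out.
Qed.

Lemma perm_shift1 : perm_shift o (1%g : 'S_k) (1%g : 'S_m).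
Proof. by split=> [i j|i _]; rewrite !perm1. Qed.

Lemma perm_shift_tperm (x y : 'I_k) (X Y : 'I_m) :
  X = o + x :> nat -> Y = o + y :> nat -> perm_shift o (tperm x y) (tperm X Y).
Proof.
move=> def_X def_Y; split=> [i j def_i | i out].
  have eqX : (i == X) = (j == x) by rewrite -!val_eqE /= def_i def_X eqn_add2l.
  have eqY : (i == Y) = (j == y) by rewrite -!val_eqE /= def_i def_Y eqn_add2l.
  case: tpermP => [/eqP|/eqP|/eqP neX /eqP neY]; rewrite ?eqX ?eqY.
  - by move/eqP->; rewrite tpermL.
  - by move/eqP->; rewrite tpermR.
  - by rewrite tpermD // eq_sym -?eqX -?eqY.
have in_shift (z : 'I_k) : o <= o + z < o + k by rewrite leq_addr ltn_add2l ltn_ord.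
by apply: tpermD; apply: (contraNneq _ out) => <-; rewrite ?def_X ?def_Y in_shift.
Qed.

Hypothesis okm : o + k <= m.

Lemma perm_shift_exists s : exists2 E : 'S_m, perm_shift o s E & odd_perm E = odd_perm s.
Proof.
have lt_shift (j : 'I_k) : o + j < m by apply: leq_trans okm; rewrite ltn_add2l.
pose sh j := Ordinal (lt_shift j).
have [ts -> _] := prod_tpermP s.
exists (\prod_(t <- ts) tperm (sh t.1) (sh t.2))%g.
  elim: ts => [|t ts IH]; first by rewrite !big_nil; apply: perm_shift1.
  by rewrite !big_cons; apply: perm_shiftM => //; apply: perm_shift_tperm.
elim: ts => [|t ts IH]; first by rewrite !big_nil !odd_perm1.
rewrite !big_cons !odd_permM IH !odd_tperm; congr (_ (+) _).
by rewrite -val_eqE /= eqn_add2l.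
Qed.

Lemma odd_perm_shift s E : perm_shift o s E -> odd_perm E = odd_perm s.
Proof. by move=> sE; have [E' /(perm_shift_uniq sE) -> <-] := perm_shift_exists s. Qed.

End PermShift.

Lemma perm_shift_refl m (s : 'S_m) : perm_shift 0 s s.
Proof. by split=> [i j /val_inj -> | i]; rewrite ?add0n ?ltn_ord. Qed.

Lemma perm_shift_fix_prefix n m (r : 'S_m) : n <= m ->
  (forall i : 'I_m, i < n -> r i = i) -> exists t : 'S_(m - n), perm_shift n t r.
Proof.
move=> le_nm r_prefix.
have r_suffix (y : 'I_m) : n <= y -> n <= r y.
  move=> le_ny; rewrite leqNgt; apply/negP => lt_ryn.
  by move: (r_prefix _ lt_ryn) le_ny => /perm_inj <-; rewrite leqNgt lt_ryn.
have lt_up (j : 'I_(m - n)) : n + j < m by have := ltn_ord j; lia.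
pose up j := Ordinal (lt_up j).
have lt_down (j : 'I_(m - n)) : r (up j) - n < m - n.
  by have := r_suffix (up j) (leq_addr _ _); have := ltn_ord (r (up j)); lia.
pose t j := Ordinal (lt_down j).
have r_up j : r (up j) = up (t j).
  by apply: ord_inj; have := r_suffix (up j) (leq_addr _ _); rewrite /=; lia.
have up_inj : injective up by move=> j1 j2 /(congr1 val) /addnI /val_inj.
have t_inj : injective t by move=> j1 j2 /(congr1 up); rewrite -!r_up => /perm_inj /up_inj.
exists (perm t_inj); split=> [i j def_i | i out]; last first.
  by apply: r_prefix; move: out; have := ltn_ord i; lia.
by rewrite permE (_ : i = up j) ?r_up //; apply: ord_inj.
Qed.

Lemma insubd_perm_ffun m (f : 'I_m -> 'I_m) (E : 'S_m) :
  f =1 E -> insubd (1%g : 'S_m) [ffun i => f i] = E.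
Proof.
move=> fE; rewrite (_ : [ffun i => f i] = pval E) ?valKd //.
by apply/ffunP => i; rewrite ffunE pvalE.
Qed.

Lemma perm_shift_ext1 k m (s : 'S_k) : k <= m -> perm_shift 0 s (ext1 k m s).
Proof.
move=> le_km; have [E [E_in E_out] _] := @perm_shift_exists 0 k m le_km s.
suff -> : ext1 k m s = E by split.
apply: insubd_perm_ffun => i; rewrite /ext1_fun.
case: insubP => [j _ val_j | out]; last by rewrite E_out.
apply: ord_inj; rewrite insubdK ?(E_in i j) ?val_j //.
exact: leq_trans (ltn_ord _) le_km.
Qed.

Lemma perm_shift_ext2 k m (s : 'S_k) : k <= m -> perm_shift (m - k) s (ext2 k m s).
Proof.
move=> le_km; have le_m : m - k + k <= m by rewrite subnK.
have [E [E_in E_out] _] := perm_shift_exists le_m s.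
suff -> : ext2 k m s = E by split.
apply: insubd_perm_ffun => i; rewrite /ext2_fun.
case: insubP => [j _ val_j | out]; last by rewrite E_out //; move: out => /=; lia.
case: ifP => [le_i | lt_i]; last by rewrite E_out //; move: lt_i => /=; lia.
have lt_m : m - k + s j < m by have := ltn_ord (s j); lia.
by apply: ord_inj; rewrite insubdK ?(E_in i j) // val_j subnKC.
Qed.

Lemma ext1_id m (s : 'S_m) : ext1 m m s = s.
Proof. exact: perm_shift_uniq (perm_shift_ext1 s (leqnn m)) (perm_shift_refl s). Qed.

Lemma ext1_widen k m (le_km : k <= m) (s : 'S_k) (i : 'I_k) :
  ext1 k m s (widen_ord le_km i) = widen_ord le_km (s i).
Proof. by apply: ord_inj; have [ext1_in _] := perm_shift_ext1 s le_km; apply: ext1_in. Qed.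

Lemma ext2_1 k m : k <= m -> ext2 k m 1 = 1%g.
Proof.
by move=> le_km; apply: perm_shift_uniq (perm_shift_ext2 1 le_km) (perm_shift1 _ _ _).
Qed.

Lemma odd_perm_ext1 k m (s : 'S_k) : k <= m -> odd_perm (ext1 k m s) = odd_perm s.
Proof. by move=> le_km; apply: odd_perm_shift (perm_shift_ext1 s le_km). Qed.

Lemma odd_perm_ext2 k m (s : 'S_k) : k <= m -> odd_perm (ext2 k m s) = odd_perm s.
Proof. by move=> le_km; apply: odd_perm_shift (perm_shift_ext2 s le_km); rewrite subnK. Qed.

Lemma perm_prefix_eq n m (le_nm : n <= m) (s s' : 'S_m) :
  (forall i : 'I_n, s (widen_ord le_nm i) = s' (widen_ord le_nm i)) ->
  exists t : 'S_(m - n), s' = (ext2 (m - n) m t * s)%g.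
Proof.
move=> ss'; pose r := (s' * s^-1)%g.
have r_prefix (i : 'I_m) : i < n -> r i = i.
  move=> lt_in; have -> : i = widen_ord le_nm (Ordinal lt_in) by apply: val_inj.
  by rewrite permM -ss' permK.
have [t shift_t] := perm_shift_fix_prefix le_nm r_prefix.
exists t; suff -> : ext2 (m - n) m t = r by rewrite mulgKV.
apply: perm_shift_uniq shift_t.
by have := perm_shift_ext2 t (leq_subr n m); rewrite subKn.
Qed.

Lemma perm_extend_inj n m (le_nm : n <= m) (f : {ffun 'I_n -> 'I_m}) :
  injective f -> exists p : 'S_m, forall i, p (widen_ord le_nm i) = f i.
Proof.
move=> f_inj.
pose s := codom f ++ [seq x <- enum 'I_m | x \notin codom f].
have uniq_s : uniq s.
  rewrite cat_uniq codomE map_inj_uniq // enum_uniq filter_uniq ?enum_uniq // andbT /=.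
  by apply/hasPn => x; rewrite mem_filter => /andP [].
have /tuple_permP [p def_p] : perm_eq s (ord_tuple m).
  apply: uniq_perm => //; first by rewrite /= enum_uniq.
  by move=> x; rewrite mem_cat mem_filter mem_enum andbT orbN.
exists p => i.
have lt_im : i < m := leq_trans (ltn_ord i) le_nm.
have s_i : nth (f i) s i = f i.
  rewrite nth_cat size_codom card_ord ltn_ord codomE.
  by rewrite (nth_map i) ?size_enum_ord ?ltn_ord // fintype.nth_ord_enum.
rewrite -s_i def_p /= (nth_map (widen_ord le_nm i)) ?size_enum_ord //=.
by rewrite tnth_ord_tuple; congr (p _); apply: val_inj; rewrite /= nth_enum_ord.
Qed.

Lemma hatS_pred_small m (s : 'S_m * int) : m <= 1 -> hatS_pred m s -> s = hunit m.
Proof. by case: s => p d le_m1; rewrite /hatS_pred le_m1 /= => /andP [/eqP-> /eqP->]. Qed.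

Lemma hatS_pred_odd m (s : 'S_m * int) :
  1 < m -> hatS_pred m s -> odd `|s.2| = odd_perm s.1.
Proof. by rewrite /hatS_pred ltnNge => /negbTE -> /eqP. Qed.

Lemma hatS_pred_canon m (p : 'S_m) : hatS_pred m (p, Posz (odd_perm p)).
Proof.
rewrite /hatS_pred; case: ifP => [le_m1 | _] /=; last by case: (odd_perm p).
by rewrite (permS01 le_m1 p) odd_perm1 eqxx.
Qed.

Lemma hatS_pred_hunit m : hatS_pred m (hunit m).
Proof. by rewrite /hatS_pred; case: (m <= 1); rewrite /= ?eqxx ?odd_perm1. Qed.

Lemma hatS_pred_e2 m : hatS_pred m (e2 m).
Proof. by rewrite /e2 /hatS_pred; case: (m <= 1); rewrite /= ?eqxx ?odd_perm1. Qed.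

Lemma hatS_pred_hmul m (s t : 'S_m * int) :
  hatS_pred m s -> hatS_pred m t -> hatS_pred m (hmul m s t).
Proof.
have [le_m1 | lt_1m] := leqP m 1.
  move=> /(hatS_pred_small le_m1) -> /(hatS_pred_small le_m1) ->.
  by rewrite /hatS_pred le_m1 /= mulg1 addr0 !eqxx.
rewrite /hatS_pred leqNgt lt_1m /= odd_abszD odd_permM => /eqP -> /eqP ->.
by rewrite addbC.
Qed.

Lemma hatS_pred_i1 k m (s : 'S_k * int) :
  k <= m -> hatS_pred k s -> hatS_pred m (i1 k m s).
Proof.
move=> le_km sk; rewrite /i1; case: leqP => [_ | lt_1k]; first exact: hatS_pred_hunit.
rewrite /hatS_pred leqNgt (leq_trans lt_1k le_km) /= odd_perm_ext1 //.
by rewrite (hatS_pred_odd lt_1k sk).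
Qed.

Lemma hatS_pred_add2 m (p : 'S_m) (d : int) :
  1 < m -> hatS_pred m (p, d) -> hatS_pred m (p, (2%:Z + d)%R).
Proof. by rewrite /hatS_pred ltnNge => /negbTE -> /=; rewrite odd_abszD. Qed.

Lemma proj_perm1 n (le_nn : n <= n) (s : 'S_n * int) :
  s.1 = 1%g -> proj n n le_nn s = ffun_id n.
Proof. by move=> s1; apply/ffunP => i; rewrite !ffunE s1 perm1; apply: val_inj. Qed.

Lemma proj_hmul_i1 n m l (le_nm : n <= m) (le_ml : m <= l) (le_nl : n <= l)
    (s : 'S_m * int) (t : 'S_l * int) :
  proj n l le_nl (hmul l t (i1 m l s)) =
    ffun_comp n m l (proj m l le_ml t) (proj n m le_nm s).
Proof.
apply/ffunP => i; rewrite !ffunE /= permM; congr (t.1 _).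
rewrite /i1; case: leqP => [le_m1 | _] /=; last first.
  rewrite (_ : widen_ord le_nl i = widen_ord le_ml (widen_ord le_nm i)) ?ext1_widen //.
  exact: val_inj.
by rewrite (permS01 le_m1 s.1) !perm1; apply: val_inj.
Qed.

Lemma proj_surj_inj n m (f : {ffun 'I_n -> 'I_m}) : injective f ->
  exists le_nm : n <= m, exists2 s, hatS_pred m s & f = proj n m le_nm s.
Proof.
move=> f_inj; have le_nm : n <= m by rewrite -(card_ord n) -(card_ord m) (leq_card f).
have [p p_ext] := perm_extend_inj le_nm f_inj.
exists le_nm, (p, Posz (odd_perm p)); first exact: hatS_pred_canon.
by apply/ffunP => i; rewrite ffunE p_ext.
Qed.

Definition perm_extends n m (p : 'S_m) (f : {ffun 'I_n -> 'I_m}) : bool :=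
  [forall i : 'I_n, forall j : 'I_m, (i == j :> nat) ==> (p j == f i)].

Lemma perm_extendsP n m (le_nm : n <= m) (p : 'S_m) (f : {ffun 'I_n -> 'I_m}) :
  reflect (forall i, p (widen_ord le_nm i) = f i) (perm_extends p f).
Proof.
apply: (iffP forallP) => [p_ext i | p_ext i].
  by move/forallP: (p_ext i) => /(_ (widen_ord le_nm i)) /implyP /(_ (eqxx _)) /eqP.
apply/forallP => j; apply/implyP => /eqP eq_ij.
by rewrite (_ : j = widen_ord le_nm i) ?p_ext //; apply: val_inj.
Qed.

Section TrivialE2.
Variables (M : nat -> zmodType) (act : forall n m : nat, 'S_m * int -> M n -> M m).
Arguments act : clear implicits.
Hypothesis act_module : is_FIhat_module M act.
Hypothesis act_e2 : forall n, act n n (e2 n) =1 id.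

Lemma act_add2 n m (p : 'S_m) (d : int) : n <= m -> 1 < m -> hatS_pred m (p, d) ->
  act n m (p, (2%:Z + d)%R) =1 act n m (p, d).
Proof.
move=> le_nm lt_1m spd x; have [_ _ _ act_comp] := act_module.
rewrite -[RHS]act_e2 act_comp ?hatS_pred_e2 //.
by rewrite /hmul /i1 /e2 leqNgt lt_1m /= ext1_id mulg1.
Qed.

Lemma act_add_even n m (p : 'S_m) (d : int) (j : nat) : n <= m -> 1 < m ->
  hatS_pred m (p, d) -> act n m (p, (d + (2 * j)%N%:Z)%R) =1 act n m (p, d).
Proof.
move=> le_nm lt_1m; elim: j d => [|j IH] d spd x; first by rewrite muln0 addr0.
rewrite (_ : (d + (2 * j.+1)%N%:Z = 2%:Z + d + (2 * j)%N%:Z)%R); last lia.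
by rewrite IH ?hatS_pred_add2 // act_add2.
Qed.

Lemma act_parity n m (p : 'S_m) (d d' : int) : n <= m -> 1 < m ->
  hatS_pred m (p, d) -> hatS_pred m (p, d') -> act n m (p, d) =1 act n m (p, d').
Proof.
move=> le_nm lt_1m; wlog le_dd' : d d' / (d <= d')%R.
  move=> W spd spd' x; have [le_dd' | /ltW le_d'd] := lerP d d'; first exact: W.
  by rewrite (W d' d).
move=> spd spd'.
have /even_halfK : ~~ odd `|(d' - d)%R|.
  rewrite odd_abszD abszN (hatS_pred_odd lt_1m spd) (hatS_pred_odd lt_1m spd').
  by rewrite addbb.
rewrite -mul2n => even_dd'.
have -> : d' = (d + (2 * `|(d' - d)%R|./2)%N%:Z)%R by lia.
by move=> x; rewrite act_add_even.
Qed.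

Lemma act_prefix_eq n m (le_nm : n <= m) (s s' : 'S_m * int) :
  hatS_pred m s -> hatS_pred m s' ->
  (forall i : 'I_n, s.1 (widen_ord le_nm i) = s'.1 (widen_ord le_nm i)) ->
  act n m s =1 act n m s'.
Proof.
have [le_m1 | lt_1m] := leqP m 1.
  by move=> /(hatS_pred_small le_m1) -> /(hatS_pred_small le_m1) ->.
case: s s' => [p d] [p' d'] sd sd' /= prefix_eq.
have [t def_p'] := perm_prefix_eq prefix_eq; rewrite def_p' in sd' *.
have [le_k1 | lt_1k] := leqP (m - n) 1.
  by move: sd'; rewrite (permS01 le_k1 t) ext2_1 ?leq_subr // mul1g; apply: act_parity.
have st : hatS_pred (m - n) (t, (d' - d)%R).
  rewrite /hatS_pred leqNgt lt_1k /= odd_abszD abszN (hatS_pred_odd lt_1m sd).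
  rewrite (hatS_pred_odd lt_1m sd') /= odd_permM odd_perm_ext2 ?leq_subr //.
  by rewrite addbK.
have [_ act_coset _ _] := act_module.
move=> x; rewrite -(act_coset _ _ _ _ le_nm sd st x).
by rewrite /hmul /i2 leqNgt lt_1k /= addrC subrK.
Qed.

(* The [0] branch is only taken for non-injective [f], which no permutation extends. *)
Definition fi_act n m (f : {ffun 'I_n -> 'I_m}) (x : M n) : M m :=
  if [pick p | perm_extends p f] is Some p then act n m (p, Posz (odd_perm p)) x else 0.

Lemma act_fi_act n m (le_nm : n <= m) (s : 'S_m * int) :
  hatS_pred m s -> act n m s =1 fi_act (proj n m le_nm s).
Proof.
move=> ss x; rewrite /fi_act; case: pickP => [p /(perm_extendsP le_nm) p_ext | no_ext].
  by apply: act_prefix_eq ss (hatS_pred_canon p) _ x => i; rewrite p_ext ffunE.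
by case/negbT/(perm_extendsP le_nm): (no_ext s.1) => i; rewrite ffunE.
Qed.

Lemma fi_act_module : is_FI_module M fi_act.
Proof.
have [act_add _ act_id act_comp] := act_module.
split=> [n m f /proj_surj_inj [le_nm [s ss ->]] x y | n x |
         n m l f g /proj_surj_inj [le_nm [s ss ->]] /proj_surj_inj [le_ml [t st ->]] x].
- by rewrite -!(act_fi_act le_nm ss) act_add.
- rewrite -(proj_perm1 (s := hunit n) (leqnn n)) // -act_fi_act ?act_id //.
  exact: hatS_pred_hunit.
- rewrite -(act_fi_act le_nm ss) -(act_fi_act le_ml st) act_comp //.
  rewrite (act_fi_act (leq_trans le_nm le_ml)) ?proj_hmul_i1 //.
  by rewrite hatS_pred_hmul ?hatS_pred_i1.
Qed.

End TrivialE2.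

Theorem mainTheorem9 (M : nat -> zmodType)
    (act : forall n m : nat, 'S_m * int -> M n -> M m) :
  is_FIhat_module M act ->
  (factors_through_FI M act <-> (forall n : nat, act n n (e2 n) =1 id)).
Proof.
move=> act_module; split=> [[nact [[_ nact_id _] act_nact]] n x | act_e2].
  rewrite (act_nact n n (leqnn n) _ (hatS_pred_e2 n)) proj_perm1 ?nact_id //.
  by rewrite /e2; case: (n <= 1).
by exists (fi_act act); split; [apply: fi_act_module | apply: act_fi_act].
Qed.
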